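(* Let $\kappa\ge3$, $n\ge1$, $r,r'$, $F$, the $n$-periodic sequences $p,q$ and the $Y$-system solution $Y_{i,j,k}$ (for $i+j+k$ even) with the initial conditions $Y_{i,j,-1}=(q_{((\kappa-2)i+\kappa j+r-r')/2})^{-1}$ ($i+j$ odd) and $Y_{i,j,0}=p_{((\kappa-2)i+\kappa j)/2}$ ($i+j$ even) be as described in the context. Then $Y$ is doubly periodic: $$Y_{i,j,k}=Y_{(i,j,k)+\alpha(\kappa,2-\kappa,0)+\beta(n,-n,0)}$$ for all $(i,j,k)$ with $i+j+k\equiv0\bmod 2$ and all $\alpha,\beta\in\mathbb Z$.
   Context: $\kappa\ge 3$ and $n\ge 1$ are integers, $r=\lfloor(\kappa-2)/2\rfloor$, $r'=\lceil(\kappa-2)/2\rceil$, $F$ a field, and $p=(p_m)_{m\in\mathbb Z}$, $q=(q_m)_{m\in\mathbb Z}$ are $n$-periodic sequences in $F$. $Y:\{(i,j,k)\in\mathbb Z^3:i+j+k \text{ even}\}\to F\setminus\{0,-1\}$ satisfies the $Y$-system $Y_{i,j,k+1}Y_{i,j,k-1}=\frac{(1+Y_{i+1,j,k})(1+Y_{i-1,j,k})}{(1+Y_{i,j+1,k}^{-1})(1+Y_{i,j-1,k}^{-1})}$ for all $(i,j,k)$ with $i+j+k$ odd, together with the stated initial conditions at $k=-1$ and $k=0$. *)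

From HB Require Import structures.
From mathcomp Require Import all_boot all_order all_algebra.
Set Implicit Arguments. Unset Strict Implicit. Unset Printing Implicit Defensive.
Import Order.TTheory GRing.Theory Num.Theory.
Local Open Scope ring_scope.

Definition rr (kappa : int) : int := ((kappa - 2) %/ 2)%Z.
Definition rr' (kappa : int) : int := kappa - 2 - rr kappa.

Definition evenz (x : int) : bool := (2 %| x)%Z.

Definition Ysystem (F : fieldType) (Y : int -> int -> int -> F) : Prop :=
  forall i j k : int, ~~ evenz (i + j + k) ->
    Y i j (k + 1) * Y i j (k - 1) =
    ((1 + Y (i + 1) j k) * (1 + Y (i - 1) j k)) /
    ((1 + (Y i (j + 1) k)^-1) * (1 + (Y i (j - 1) k)^-1)).

(** The shift [(i, j) |-> (i + alpha kappa + beta n, j + alpha (2 - kappa) - beta n)]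
    has even coordinate sum, so it maps solutions of the Y-system to solutions.
    It changes the index [(kappa - 2) i + kappa j] of the initial data by
    [- 2 beta n], so by [n]-periodicity of [p] and [q] the shifted solution has
    the same values at [k = -1] and [k = 0] as [Y].  Since every [Y] is nonzero,
    the Y-system determines level [k + 1] from levels [k] and [k - 1] and
    conversely, so a solution is determined by its initial data. *)

From HB Require Import structures.
From mathcomp Require Import all_boot all_order all_algebra.
From mathcomp Require Import zify ring.
Import Order.TTheory GRing.Theory Num.Theory.
Local Open Scope ring_scope.

Lemma int_ind2 (P : int -> Prop) :
  P (-1) -> P 0 ->
  (forall k, P (k - 1) -> P k -> P (k + 1)) ->
  (forall k, P k -> P (k + 1) -> P (k - 1)) ->
  forall k, P k.
Proof.
move=> Pm1 P0 Pup Pdown.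
have Pnat (m : nat) : (P m /\ P (m%:Z - 1)) /\ (P (- m%:Z) /\ P (- m%:Z - 1)).
  elim: m => [|m [[Pm Pm_1] [Pnm Pnm_1]]]; first by rewrite oppr0 sub0r.
  rewrite -addn1 PoszD opprD addrK; split; split => //.
  - exact: Pup.
  - by have := Pdown _ Pnm_1; rewrite subrK; apply.
case=> m; first by case: (Pnat m) => -[].
have -> : Negz m = - m%:Z - 1 by rewrite NegzE; lia.
by case: (Pnat m) => _ [].
Qed.

Lemma periodic_mul (T : Type) (f : int -> T) (n : int) :
  (forall m, f (m + n) = f m) -> forall c m, f (m + c * n) = f m.
Proof.
move=> f_per.
have f_perN (c : nat) m : f (m + c%:Z * n) = f m.
  elim: c m => [|c IHc] m; first by rewrite mul0r addr0.
  by rewrite -addn1 PoszD mulrDl mul1r addrA f_per IHc.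
case=> c m; first exact: f_perN.
by rewrite NegzE mulNr -[in RHS](subrK (c.+1%:Z * n) m) f_perN.
Qed.

Lemma periodic_half (T : Type) (f : int -> T) (n : int) :
  (forall m, f (m + n) = f m) -> forall c m, f ((c * n * 2 + m) %/ 2)%Z = f (m %/ 2)%Z.
Proof. by move=> f_per c m; rewrite divzMDl // addrC periodic_mul. Qed.

Lemma index_shift (kappa n alpha beta i j : int) :
  (kappa - 2) * (i + (alpha * kappa + beta * n))
    + kappa * (j + (alpha * (2 - kappa) - beta * n))
  = - beta * n * 2 + ((kappa - 2) * i + kappa * j).
Proof. by ring. Qed.

Lemma Ysystem_shift (F : fieldType) (Y : int -> int -> int -> F) (a b : int) :
  evenz (a + b) -> Ysystem Y -> Ysystem (fun i j k => Y (i + a) (j + b) k).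
Proof.
move=> even_ab sY i j k odd_ijk /=.
rewrite sY; last by move: even_ab odd_ijk; rewrite /evenz; lia.
by rewrite (addrAC i 1) (addrAC i (-1)) (addrAC j 1) (addrAC j (-1)).
Qed.

Definition eq_on_level {F : fieldType} (Y1 Y2 : int -> int -> int -> F) (k : int) :=
  forall i j, evenz (i + j + k) -> Y1 i j k = Y2 i j k.

Section Uniqueness.

Variables (F : fieldType) (Y1 Y2 : int -> int -> int -> F).
Hypothesis Y1_neq0 : forall i j k, evenz (i + j + k) -> Y1 i j k != 0.
Hypotheses (sY1 : Ysystem Y1) (sY2 : Ysystem Y2).

Lemma Ysystem_prod_eq {k i j : int} : eq_on_level Y1 Y2 k -> ~~ evenz (i + j + k) ->
  Y1 i j (k + 1) * Y1 i j (k - 1) = Y2 i j (k + 1) * Y2 i j (k - 1).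
Proof.
move=> eqk odd_ijk.
by rewrite sY1 // sY2 // !eqk //; move: odd_ijk; rewrite /evenz; lia.
Qed.

Lemma Ysystem_unique :
  eq_on_level Y1 Y2 (-1) -> eq_on_level Y1 Y2 0 -> forall k, eq_on_level Y1 Y2 k.
Proof.
move=> eqm1 eq0; apply: int_ind2 => // k.
- move=> eq_km1 eq_k i j even_ijk.
  have odd_k : ~~ evenz (i + j + k) by move: even_ijk; rewrite /evenz; lia.
  have even_km1 : evenz (i + j + (k - 1)) by move: even_ijk; rewrite /evenz; lia.
  move: (Ysystem_prod_eq eq_k odd_k).
  by rewrite -eq_km1 // => /(mulIf (Y1_neq0 _ _ _ even_km1)).
- move=> eq_k eq_k1 i j even_ijk.
  have odd_k : ~~ evenz (i + j + k) by move: even_ijk; rewrite /evenz; lia.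
  have even_k1 : evenz (i + j + (k + 1)) by move: even_ijk; rewrite /evenz; lia.
  move: (Ysystem_prod_eq eq_k odd_k).
  by rewrite -eq_k1 // => /(mulfI (Y1_neq0 _ _ _ even_k1)).
Qed.

End Uniqueness.

Theorem mainTheorem2 (F : fieldType) (kappa n : int)
  (p q : int -> F) (Y : int -> int -> int -> F) :
  3 <= kappa -> 1 <= n ->
  (forall m : int, p (m + n) = p m) ->
  (forall m : int, q (m + n) = q m) ->
  (forall i j k : int, evenz (i + j + k) -> Y i j k != 0 /\ Y i j k != -1) ->
  Ysystem Y ->
  (forall i j : int, ~~ evenz (i + j) ->
     Y i j (-1) = (q ((((kappa - 2) * i + kappa * j + rr kappa - rr' kappa) %/ 2)%Z))^-1) ->
  (forall i j : int, evenz (i + j) ->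
     Y i j 0 = p ((((kappa - 2) * i + kappa * j) %/ 2)%Z)) ->
  forall i j k : int, evenz (i + j + k) ->
  forall alpha beta : int,
    Y i j k = Y (i + alpha * kappa + beta * n) (j + alpha * (2 - kappa) - beta * n) k.
Proof.
move=> _ _ p_per q_per Y_neq0 sY Ym1 Y0 i j k even_ijk alpha beta.
rewrite -(addrA i) -(addrA j).
set a := alpha * kappa + beta * n; set b := alpha * (2 - kappa) - beta * n.
have even_ab : evenz (a + b).
  have -> : a + b = alpha * 2 by rewrite /a /b; ring.
  by rewrite /evenz; lia.
have even_shift x y : evenz (x + y) = evenz (x + a + (y + b)).
  by move: even_ab; rewrite /evenz; lia.
apply: (@Ysystem_unique _ Y (fun x y z => Y (x + a) (y + b) z) _ _ _ _ _ k i j even_ijk).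
- by move=> x y z /Y_neq0 [].
- exact: sY.
- exact: Ysystem_shift.
- move=> x y even_xy1.
  have odd_xy : ~~ evenz (x + y) by move: even_xy1; rewrite /evenz; lia.
  by rewrite Ym1 // Ym1 -?even_shift // index_shift -!addrA periodic_half.
- move=> x y; rewrite !addr0 => even_xy.
  by rewrite Y0 // Y0 -?even_shift // index_shift periodic_half.
Qed.
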